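(* The algorithm RATT described in the context runs in $O(|\mathcal{U}_{\mathcal{V}}|^2)$ time, where $\mathcal{U}_{\mathcal{V}}=\bigcup_{i\in\mathcal{V}}\mathcal{U}_i$ is the joint set of available control inputs of all robots (each evaluation of the objective $\Phi$ counting as one operation).
   Context: There are $N$ robots $\mathcal{V}=\{1,\dots,N\}$, robot $i$ choosing its control input from a finite nonempty set $\mathcal{U}_i$. $\Phi(\mathcal{W})$ denotes the team tracking quality obtained when the robots in $\mathcal{W}\subseteq\mathcal{V}$ (with their chosen inputs) fuse their measurements. Given integers $\alpha_s\le N$ and $\alpha_c\le N(N-1)/2$: CAA$(N,\alpha_c)$: set $e_r=N(N-1)/2-\alpha_c$; for $n=1,\dots,N$ in increasing order compute $q_n=\lfloor N/n\rfloor$, $r_n=N-nq_n$, $\bar e_n=q_n\frac{n(n-1)}{2}+\frac{r_n(r_n-1)}{2}$, and let $n_{\max}$ be the first $n$ with $e_r\le\bar e_n$; return $\alpha_{c,s}=N-n_{\max}$. RATT: compute $\alpha_{c,s}$ by CAA, set $\alpha=\alpha_s+\alpha_{c,s}$. If $\alpha<N$: for each robot $i$ compute $\max_{\mathbf{u}_i\in\mathcal{U}_i}\Phi(\{i\})$; select the $\alpha$ robots with the largest values and assign each the input attaining its individual maximum; then assign inputs to the remaining robots by the standard greedy algorithm (starting from $\mathcal{V}_g=\emptyset$, repeatedly choose an unassigned robot and input maximizing the marginal gain $\Phi(\mathcal{V}_g\cup\{i'\})-\Phi(\mathcal{V}_g)$ and add it to $\mathcal{V}_g$). If $\alpha\ge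 N$: assign each robot the input maximizing $\Phi(\{i\})$. *)

From mathcomp Require Import all_boot all_order all_algebra.
Set Implicit Arguments. Unset Strict Implicit. Unset Printing Implicit Defensive.
Import Order.TTheory GRing.Theory Num.Theory.
Local Open Scope ring_scope.

(* ---- A tiny cost monad: a value together with the number of elementary
   operations spent computing it. ---- *)
Definition M (T : Type) := (T * nat)%type.
Definition retM {T} (x : T) : M T := (x, 0%N).
Definition bindM {T S} (m : M T) (k : T -> M S) : M S :=
  let: (x, c) := m in let: (y, d) := k x in (y, (c + d)%N).
Definition tick {T} (n : nat) (x : T) : M T := (x, n).

Section RATT.
Variables (R : realDomainType) (A : eqType) (N : nat).
(* U i = finite nonempty set of control inputs of robot i (as a list). *)
Variable U : 'I_N -> seq A.
(* An assignment of inputs to a subset W of robots: robots outside W are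
   mapped to None. Phi f is the team tracking quality Phi(W). *)
Variable Phi : {ffun 'I_N -> option A} -> R.

Definition assign_empty : {ffun 'I_N -> option A} := [ffun => None].
Definition assign_upd (f : {ffun 'I_N -> option A}) (i : 'I_N) (u : A) :
  {ffun 'I_N -> option A} := [ffun j => if j == i then Some u else f j].

Definition evalPhi (f : {ffun 'I_N -> option A}) : M R := (Phi f, 1%N).

Fixpoint best_of {T} (s : seq T) (score : T -> M R) (cur : option (T * R))
  : M (option (T * R)) :=
  match s with
  | [::] => retM cur
  | x :: s' =>
      bindM (score x) (fun v => bindM (tick 1 tt) (fun _ =>
        let cur' := match cur with
                    | None => Some (x, v)
                    | Some (y, w) => if w < v then Some (x, v) else cur
                    end in
        best_of s' score cur'))
  end.

Fixpoint mapM {T S} (f : T -> M S) (s : seq T) : M (seq S) :=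
  match s with
  | [::] => retM [::]
  | x :: s' => bindM (f x) (fun y => bindM (mapM f s') (fun ys => retM (y :: ys)))
  end.

Definition ebar (n : nat) : nat :=
  let q := (N %/ n)%N in let r := (N - n * q)%N in
  (q * (n * (n - 1) %/ 2) + r * (r - 1) %/ 2)%N.

Definition caa (alpha_c : nat) : M nat :=
  let er := (N * (N - 1) %/ 2 - alpha_c)%N in
  let fix loop (ns : seq nat) : M nat :=
      match ns with
      | [::] => retM N
      | n :: ns' => bindM (tick 1 tt) (fun _ =>
                      if (er <= ebar n)%N then retM n else loop ns')
      end in
  bindM (loop (iota 1 N)) (fun nmax => retM (N - nmax)%N).

Definition indiv_best (i : 'I_N) : M (option (A * R)) :=
  best_of (U i) (fun u => evalPhi (assign_upd assign_empty i u)) None.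

Fixpoint select_top (k : nat) (value : 'I_N -> R) (sel : seq 'I_N)
  : M (seq 'I_N) :=
  match k with
  | 0 => retM sel
  | k'.+1 =>
      bindM (best_of [seq i <- enum 'I_N | i \notin sel]
                     (fun i => retM (value i)) None)
            (fun b => match b with
                      | None => retM sel
                      | Some (i, _) => select_top k' value (i :: sel)
                      end)
  end.

Fixpoint greedy (k : nat) (Vg : {ffun 'I_N -> option A}) (unassigned : seq 'I_N)
  : M {ffun 'I_N -> option A} :=
  match k with
  | 0 => retM Vg
  | k'.+1 =>
      bindM (evalPhi Vg) (fun base =>
      bindM (best_of [seq (i, u) | i <- unassigned, u <- U i]
               (fun p => bindM (evalPhi (assign_upd Vg p.1 p.2))
                               (fun v => tick 1 (v - base))) None)
            (fun b => match b with
                      | None => retM Vg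
                      | Some ((i, u), _) =>
                          greedy k' (assign_upd Vg i u)
                                 [seq j <- unassigned | j != i]
                      end))
  end.

Definition ratt (alpha_s alpha_c : nat) : M {ffun 'I_N -> option A} :=
  bindM (caa alpha_c) (fun alpha_cs =>
  let alpha := (alpha_s + alpha_cs)%N in
  bindM (mapM indiv_best (enum 'I_N)) (fun bests =>
  let best (i : 'I_N) := nth None bests i in
  let value (i : 'I_N) := odflt 0 (omap snd (best i)) in
  let input (i : 'I_N) := omap fst (best i) in
  if (alpha < N)%N then
    bindM (select_top alpha value [::]) (fun sel =>
    let rest := [seq i <- enum 'I_N | i \notin sel] in
    bindM (greedy (size rest) assign_empty rest) (fun Vg =>
    retM [ffun i => if i \in sel then input i else Vg i]))
  else retM [ffun i => input i])).

Definition ratt_cost (alpha_s alpha_c : nat) : nat := (ratt alpha_s alpha_c).2.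

End RATT.

(* The joint set U_V of available control inputs of all robots
   (inputs of different robots are distinct: disjoint union). *)
Definition joint_inputs {A : eqType} {N : nat} (U : 'I_N -> seq A)
  : seq ('I_N * A) := [seq (i, u) | i <- enum 'I_N, u <- U i].

From mathcomp Require Import all_boot all_order all_algebra.
From mathcomp Require Import zify.

Set Implicit Arguments.
Unset Strict Implicit.

(* Every phase of RATT scans lists whose lengths are bounded by |U_V|: CAA makes
   at most N comparisons, the individual maxima cost two operations per input,
   each of the alpha < N selection rounds compares at most N values, and each of
   the at most N greedy rounds spends three operations per remaining
   (robot, input) pair plus one evaluation of Phi(V_g).  Since every robot has
   an input, N <= |U_V|, so the total is at most 8 |U_V|^2. *)

Lemma bindM_cost T S (m : M T) (k : T -> M S) : (bindM m k).2 = (m.2 + (k m.1).2)%N.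
Proof. by case: m => x c /=; case: (k x). Qed.

Lemma mapM_cost T S (f : T -> M S) (s : seq T) :
  (mapM f s).2 = (\sum_(x <- s) (f x).2)%N.
Proof. by elim: s => [|x s IH]; rewrite ?big_nil ?big_cons //= !bindM_cost IH addn0. Qed.

Lemma best_of_cost (R : realDomainType) T (s : seq T) (score : T -> M R) c cur :
  (forall x, (score x).2 <= c)%N -> ((best_of s score cur).2 <= c.+1 * size s)%N.
Proof.
move=> score_le; elim: s cur => [|x s IH] cur; first by [].
rewrite [size _]/= mulnS; cbn [best_of]; rewrite !bindM_cost addnA addn1.
by rewrite leq_add ?ltnS.
Qed.

Lemma caa_cost N alpha_c : ((caa N alpha_c).2 <= N)%N.
Proof.
rewrite /caa bindM_cost addn0 -[X in (_ <= X)%N](size_iota 1).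
by elim: (iota 1 N) => [|n ns IH] //; rewrite bindM_cost; case: ifP.
Qed.

Lemma size_filter_enum_ord n (P : pred 'I_n) : (size (filter P (enum 'I_n)) <= n)%N.
Proof. by rewrite size_filter -[X in (_ <= X)%N]size_enum_ord count_size. Qed.

Lemma leq_sum_filter I (s : seq I) (P : pred I) (F : I -> nat) :
  (\sum_(i <- filter P s) F i <= \sum_(i <- s) F i)%N.
Proof. by rewrite big_filter big_mkcond leq_sum // => i _; case: ifP. Qed.

Section RATTCost.
Variables (R : realDomainType) (A : eqType) (N : nat).
Variables (U : 'I_N -> seq A) (Phi : {ffun 'I_N -> option A} -> R).

Lemma size_joint_inputs : size (joint_inputs U) = (\sum_(i <- enum 'I_N) size (U i))%N.
Proof. by rewrite size_allpairs_dep sumnE big_map. Qed.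

Lemma card_le_size_joint_inputs :
  (forall i, U i != [::]) -> (N <= size (joint_inputs U))%N.
Proof.
move=> U_neq0; rewrite size_joint_inputs -[X in (X <= _)%N]size_enum_ord -sum1_size.
by apply: leq_sum => i _; rewrite lt0n size_eq0.
Qed.

Lemma individual_maxima_cost :
  ((mapM (indiv_best U Phi) (enum 'I_N)).2 <= 2 * size (joint_inputs U))%N.
Proof.
rewrite mapM_cost size_joint_inputs big_distrr /=.
by apply: leq_sum => i _; apply: best_of_cost.
Qed.

Lemma select_top_cost k (value : 'I_N -> R) sel :
  ((select_top k value sel).2 <= k * N)%N.
Proof.
elim: k sel => [|k IH] sel //=; rewrite bindM_cost mulSn.
apply: leq_add; last by case: (best_of _ _ _).1 => [[i _]|].
apply: (@leq_trans (size [seq i <- enum 'I_N | i \notin sel])).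
  by rewrite -[X in (_ <= X)%N]mul1n best_of_cost.
exact: size_filter_enum_ord.
Qed.

Lemma greedy_cost S k Vg unassigned :
  (\sum_(i <- unassigned) size (U i) <= S)%N ->
  ((greedy U Phi k Vg unassigned).2 <= k * (3 * S).+1)%N.
Proof.
elim: k Vg unassigned => [|k IH] Vg unassigned inputs_le //.
cbn [greedy]; rewrite !bindM_cost mulSn [(evalPhi _ _).2]/= addnA add1n.
apply: leq_add.
  rewrite ltnS; apply: leq_trans (best_of_cost (c := 2) _ _ _) _.
    by move=> p; rewrite bindM_cost.
  by rewrite leq_mul2l size_allpairs_dep sumnE big_map inputs_le orbT.
case: (best_of _ _ _).1 => [[[i u] _]|] //=.
by apply: IH; exact: leq_trans (leq_sum_filter _ _ _) inputs_le.
Qed.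

Lemma ratt_cost_le alpha_s alpha_c :
  (ratt_cost U Phi alpha_s alpha_c <=
   N + (2 * size (joint_inputs U) + (N * N + N * (3 * size (joint_inputs U)).+1)))%N.
Proof.
rewrite /ratt_cost /ratt bindM_cost (bindM_cost (mapM _ _)).
apply: leq_add; first exact: caa_cost.
apply: leq_add; first exact: individual_maxima_cost.
case: ifP => [alpha_lt|_] //.
rewrite !bindM_cost addn0; apply: leq_add.
  by apply: leq_trans (select_top_cost _ _ _) _; rewrite leq_mul2r ltnW ?orbT.
apply: leq_trans (greedy_cost (S := size (joint_inputs U)) _ _ _) _.
  by rewrite (leq_trans (leq_sum_filter _ _ _)) // size_joint_inputs.
by rewrite leq_mul2r size_filter_enum_ord orbT.
Qed.

End RATTCost.

Theorem theorem2 :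
  exists C : nat,
  forall (R : realDomainType) (A : eqType) (N : nat) (U : 'I_N -> seq A)
         (Phi : {ffun 'I_N -> option A} -> R) (alpha_s alpha_c : nat),
    (forall i, U i != [::]) ->
    (forall i, uniq (U i)) ->
    (alpha_s <= N)%N ->
    (alpha_c <= N * (N - 1) %/ 2)%N ->
    (ratt_cost U Phi alpha_s alpha_c <= C * (size (joint_inputs U)) ^ 2)%N.
Proof.
exists 8 => R A N U Phi alpha_s alpha_c U_neq0 _ _ _.
apply: leq_trans (ratt_cost_le _ _ _ _) _.
have := card_le_size_joint_inputs U_neq0.
by move: (size _) => S N_le_S; nia.
Qed.
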